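(* If $n\ge1$ and $m\ge 2$ are both odd, then $K(\mathbb{Z}_m^n)=\mathbb{Z}_m^n$.
   Context: The Ducci function $D:\mathbb{Z}_m^n\to\mathbb{Z}_m^n$ is $D(x_1,\dots,x_n)=(x_1+x_2,\,x_2+x_3,\,\dots,\,x_{n-1}+x_n,\,x_n+x_1)$, entries mod $m$. $K(\mathbb{Z}_m^n)$ is the set of $\mathbf{u}\in\mathbb{Z}_m^n$ lying in the Ducci cycle of some tuple, i.e. the set of $\mathbf{u}$ with $D^k(\mathbf{u})=\mathbf{u}$ for some $k\ge1$. *)

From mathcomp Require Import all_boot all_algebra.
Set Implicit Arguments. Unset Strict Implicit. Unset Printing Implicit Defensive.
Import GRing.Theory.
Local Open Scope ring_scope.

(* Tuples in Z_m^n are finite functions 'I_n -> 'Z_m (used only with m >= 2).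
   Coordinate i (0-based) of D x is x_i + x_{i+1}, indices taken cyclically
   (ordS i = i+1 mod n), so the last coordinate is x_{n-1} + x_0. *)
Definition ducci (m n : nat) (x : {ffun 'I_n -> 'Z_m}) : {ffun 'I_n -> 'Z_m} :=
  [ffun i => x i + x (ordS i)].

Definition in_ducci_cycle (m n : nat) (u : {ffun 'I_n -> 'Z_m}) : Prop :=
  exists k : nat, (0 < k)%N /\ iter k (@ducci m n) u = u.

From mathcomp Require Import all_boot all_algebra.
Import GRing.Theory.
Local Open Scope ring_scope.

(* If D x = D y then d := x - y satisfies d_{i+1} = -d_i, so going once around
   the odd cycle gives d_i = -d_i; as 2 is invertible mod an odd m, d = 0.
   Hence D is injective on the finite set Z_m^n, i.e. a permutation, and every
   tuple lies on its own cycle. *)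

Lemma val_iter_ordS n k (i : 'I_n) : val (iter k (@ordS n) i) = ((i + k) %% n)%N.
Proof.
elim: k => [|k IHk] /=; first by rewrite addn0 modn_small.
by rewrite IHk addnS -addn1 modnDml addn1.
Qed.

Lemma iter_ordS_id n (i : 'I_n) : iter n (@ordS n) i = i.
Proof. by apply: val_inj; rewrite val_iter_ordS modnDr modn_small. Qed.

Section Antiperiodic.

Variables (R : unitRingType) (n : nat) (f : 'I_n -> R).
Hypothesis f_antiperiodic : forall i, f (ordS i) = - f i.

Lemma iter_ordS_antiperiodic k i :
  f (iter k (@ordS n) i) = if odd k then - f i else f i.
Proof.
elim: k => [|k IHk] //=; rewrite f_antiperiodic IHk.
by case: (odd k); rewrite ?opprK.
Qed.

Lemma antiperiodic_eq0 : odd n -> (2%:R : R) \is a GRing.unit -> forall i, f i = 0.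
Proof.
move=> n_odd unit2 i; apply: (mulrI unit2).
have := iter_ordS_antiperiodic n i; rewrite iter_ordS_id n_odd => /eqP.
by rewrite mulr0 mulr_natl -subr_eq0 opprK -mulr2n => /eqP.
Qed.

End Antiperiodic.

Lemma ducci_inj m n : odd n -> (2%:R : 'Z_m) \is a GRing.unit ->
  injective (@ducci m n).
Proof.
move=> n_odd unit2 x y /ffunP Dxy; apply/ffunP => i; apply/eqP.
rewrite -subr_eq0; apply/eqP; move: i; apply: antiperiodic_eq0 => // i.
have := Dxy i; rewrite !ffunE => /eqP.
by rewrite -subr_eq0 opprD addrACA addrC addr_eq0 => /eqP.
Qed.

Theorem corollary2p3 (m n : nat) :
  (1 <= n)%N -> (2 <= m)%N -> odd n -> odd m ->
  forall u : {ffun 'I_n -> 'Z_m}, in_ducci_cycle u.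
Proof.
move=> _ m_gt1 n_odd m_odd u.
have unit2 : (2%:R : 'Z_m) \is a GRing.unit by rewrite unitZpE // coprimen2.
exists (order (@ducci m n) u); split; first exact: order_gt0.
exact/iter_order/ducci_inj.
Qed.
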